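(* For $n\ge3$, $$\mathcal{K}_n(\lambda)=\lambda\,\mathcal{A}_{n-1}(\lambda)-\lambda^2\,\mathcal{A}_{n-3}(\lambda).$$
   Context: For $n\ge3$, $\mathcal{K}_n(\lambda)=\det(\lambda I_n-M_n)$, where $(M_n)_{j,i}=1$ if $i\ge j-1$ or $(j,i)=(n,n-2)$, and $0$ otherwise. For $n\ge1$, $\mathcal{A}_n(\lambda)=\det(\lambda I_n-N_n)$ with $(N_n)_{j,i}=1$ if $i\ge j-1$ and $0$ otherwise; $\mathcal{A}_0(\lambda)=1$. *)

From mathcomp Require Import all_boot all_algebra.
Set Implicit Arguments. Unset Strict Implicit. Unset Printing Implicit Defensive.
Import GRing.Theory.
Local Open Scope ring_scope.

(* Indices are 0-based: entry (j, i) of the paper (1-based, row j, column i)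
   is entry (j-1, i-1) here.  The conditions are translated accordingly:
   i >= j - 1 (1-based)  <->  i + 1 >= j (0-based, same shift on both sides),
   (j,i) = (n, n-2)      <->  (j,i) = (n-1, n-3). *)

Definition Nmx (R : nzRingType) (n : nat) : 'M[R]_n :=
  \matrix_(j < n, i < n) (if (j <= i.+1)%N then 1 else 0).

Definition Kmx (R : nzRingType) (n : nat) : 'M[R]_n :=
  \matrix_(j < n, i < n)
    (if ((j <= i.+1)%N || ((nat_of_ord j == n.-1) && (nat_of_ord i == n - 3))%N) then 1 else 0).

Definition Kpoly (R : comNzRingType) (n : nat) : {poly R} := char_poly (Kmx R n).

Definition Apoly (R : comNzRingType) (n : nat) : {poly R} :=
  if n is 0 then 1 else char_poly (Nmx R n).

From mathcomp Require Import all_boot all_algebra ring.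
Import GRing.Theory.
Local Open Scope ring_scope.

(* Subtracting the second row of ['X - M] from the first leaves
   ['X, -'X, 0, ..., 0] as soon as the first two rows of [M] are all ones and
   its first column vanishes below them; expanding along that row gives
   [char M = 'X * (char M' - char M'')], where [M'] and [M''] delete the first
   one, resp. two, rows and columns.  Both [N_n] and [M_n] (for n >= 4) have
   this shape, with minors [N_(n-1)], [N_(n-2)], resp. [M_(n-1)], [M_(n-2)],
   so [K_n] and the right-hand side satisfy the same two-step recurrence;
   they agree for n = 3 and n = 4. *)

Local Notation ord1 := (lift ord0 ord0).

Lemma det_first_rows_differ (R : comNzRingType) n (M : 'M[R]_n.+2) (a : R) :
  M ord0 ord0 = M ord1 ord0 + a ->
  M ord0 ord1 = M ord1 ord1 - a ->
  (forall i : 'I_n.+2, (1 < i)%N -> M ord0 i = M ord1 i) ->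
  (forall j : 'I_n.+2, (1 < j)%N -> M j ord0 = 0) ->
  \det M = a * (\det (row' ord0 (col' ord0 M))
                + M ord1 ord0 * \det (row' ord0 (col' ord0 (row' ord0 (col' ord0 M))))).
Proof.
move=> M00 M01 M0i Mj0.
pose E := \matrix_(j, k) M (if j == ord0 then ord1 else j) k.
pose D := \matrix_(j, k) if j == ord0 then M ord0 k - M ord1 k else M j k.
have detE : \det E = 0.
  by apply: (@determinant_alternate _ _ _ ord0 ord1) => // k; rewrite !mxE.
have detM : \det M = 1 * \det E + 1 * \det D.
  apply: (determinant_multilinear (i0 := ord0)).
  - by apply/rowP => k; rewrite !mxE !mul1r addrC subrK.
  - by apply/matrixP => j k; rewrite !mxE.
  - by apply/matrixP => j k; rewrite !mxE.
have minor01 : \det (row' ord0 (col' ord1 M))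
    = M ord1 ord0 * \det (row' ord0 (col' ord0 (row' ord0 (col' ord0 M)))).
  have lift10 : lift ord1 ord0 = ord0 :> 'I_n.+2 by apply: val_inj.
  rewrite (expand_det_col _ ord0) big_ord_recl big1 ?addr0 => [|j _].
    rewrite !mxE /cofactor expr0 mul1r lift10; congr (_ * \det _).
    by apply/matrixP => j k; rewrite !mxE; congr (M _ _); apply: val_inj.
  by rewrite !mxE lift10 Mj0 ?mul0r.
rewrite detM detE mulr0 add0r mul1r (expand_det_row _ ord0).
rewrite !big_ord_recl big1 ?addr0 => [|k _]; last first.
  by rewrite !mxE /= M0i ?subrr ?mul0r.
rewrite /cofactor !mxE M00 M01 /= /bump /= expr0 expr1 !mul1r.
have -> : row' ord0 (col' ord1 D) = row' ord0 (col' ord1 M).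
  by apply/matrixP => j k; rewrite !mxE.
have -> : row' ord0 (col' ord0 D) = row' ord0 (col' ord0 M).
  by apply/matrixP => j k; rewrite !mxE.
rewrite minor01; ring.
Qed.

Lemma char_poly_two_rows_ones (R : comNzRingType) n (A : 'M[R]_n.+2) :
  (forall i, A ord0 i = 1) -> (forall i, A ord1 i = 1) ->
  (forall j : 'I_n.+2, (1 < j)%N -> A j ord0 = 0) ->
  char_poly A = 'X * (char_poly (row' ord0 (col' ord0 A))
                      - char_poly (row' ord0 (col' ord0 (row' ord0 (col' ord0 A))))).
Proof.
move=> A0i A1i Aj0.
rewrite /char_poly (@det_first_rows_differ _ _ _ 'X).
- by rewrite !row'_col'_char_poly_mx !mxE A1i /= mulr0n polyC1 sub0r mulN1r.
- by rewrite /char_poly_mx !mxE A0i A1i /= mulr1n mulr0n sub0r addrC.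
- by rewrite /char_poly_mx !mxE A0i A1i /= mulr1n mulr0n addrAC subrr.
- by move=> [[|[|i]] lti] //= _; rewrite /char_poly_mx !mxE A0i A1i -!val_eqE.
- by move=> [[|[|j]] ltj] //= _; rewrite /char_poly_mx !mxE Aj0 // -val_eqE /= subr0.
Qed.

Lemma Nmx_minor (R : comNzRingType) n : row' ord0 (col' ord0 (Nmx R n.+1)) = Nmx R n.
Proof. by apply/matrixP => i j; rewrite !mxE. Qed.

Lemma Kmx_minor (R : comNzRingType) n :
  (3 <= n)%N -> row' ord0 (col' ord0 (Kmx R n.+1)) = Kmx R n.
Proof.
case: n => [|[|[|n]]] // _; apply/matrixP => i j.
by rewrite !mxE /= /bump /= !add1n ltnS !eqSS !subSS !subn0.
Qed.

Lemma Kmx3_minor (R : comNzRingType) : row' ord0 (col' ord0 (Kmx R 3)) = Nmx R 2.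
Proof. by apply/matrixP => -[[|[|i]] ?] [[|[|j]] ?]; rewrite !mxE. Qed.

Lemma char_poly_Nmx0 (R : comNzRingType) : char_poly (Nmx R 0) = 1.
Proof. exact: det_mx00. Qed.

Lemma char_poly_Nmx1 (R : comNzRingType) : char_poly (Nmx R 1) = 'X - 1.
Proof. by rewrite /char_poly det_mx11 !mxE /= polyC1 mulr1n. Qed.

Lemma char_poly_Nmx_rec (R : comNzRingType) n :
  char_poly (Nmx R n.+2) = 'X * (char_poly (Nmx R n.+1) - char_poly (Nmx R n)).
Proof.
rewrite char_poly_two_rows_ones ?Nmx_minor // => [i|i|]; rewrite ?mxE //.
by move=> [[|[|j]] ?]; rewrite mxE.
Qed.

Lemma char_poly_Kmx_rec (R : comNzRingType) n : (2 <= n)%N ->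
  char_poly (Kmx R n.+2)
  = 'X * (char_poly (Kmx R n.+1) - char_poly (row' ord0 (col' ord0 (Kmx R n.+1)))).
Proof.
move=> n_ge2; rewrite char_poly_two_rows_ones -?(@Kmx_minor R n.+1) // => [i|i|]; rewrite ?mxE //.
move=> j j_gt1; rewrite mxE leqNgt j_gt1 /=.
have -> : (0 == n.+2 - 3)%N = false by case: n n_ge2 {j j_gt1} => [|[|n]].
by rewrite andbF.
Qed.

Lemma char_poly_Kmx3 (R : comNzRingType) :
  char_poly (Kmx R 3) = 'X ^+ 3 - 3%:R * 'X ^+ 2 :> {poly R}.
Proof.
rewrite /char_poly (expand_det_row _ ord0) !big_ord_recl big_ord0 /cofactor.
rewrite !(expand_det_row _ ord0) !big_ord_recl !big_ord0 /cofactor.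
rewrite !det_mx11 !mxE /bump /= polyC1 !mulr1n !mulr0n; ring.
Qed.

Lemma eq_two_step_rec (T : Type) (f : T -> T -> T) (u v : nat -> T) :
  (forall m, u m.+2 = f (u m.+1) (u m)) -> (forall m, v m.+2 = f (v m.+1) (v m)) ->
  u 0 = v 0 -> u 1 = v 1 -> u =1 v.
Proof.
move=> urec vrec u0 u1 m.
suff [] : u m = v m /\ u m.+1 = v m.+1 by [].
by elim: m => [|m [IHm IHm1]]; split; rewrite // urec vrec IHm IHm1.
Qed.

Lemma Apoly_char_poly (R : comNzRingType) m : Apoly R m = char_poly (Nmx R m).
Proof. by case: m => [|m] //; rewrite char_poly_Nmx0. Qed.

Theorem lemma4 (R : comNzRingType) (n : nat) (hn : (3 <= n)%N) :
  Kpoly R n = 'X * Apoly R n.-1 - 'X ^+ 2 * Apoly R (n - 3)%N.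
Proof.
case: n hn => [|[|[|m]]] // _.
rewrite /Kpoly !Apoly_char_poly /= !subSS subn0.
apply: (@eq_two_step_rec _ (fun p q => 'X * (p - q))
          (fun k => char_poly (Kmx R k.+3))
          (fun k => 'X * char_poly (Nmx R k.+2) - 'X ^+ 2 * char_poly (Nmx R k))).
- by move=> k; rewrite char_poly_Kmx_rec // Kmx_minor.
- by move=> k; rewrite !(char_poly_Nmx_rec _ k.+2) (char_poly_Nmx_rec _ k); ring.
- by rewrite char_poly_Kmx3 !char_poly_Nmx_rec char_poly_Nmx1 char_poly_Nmx0; ring.
- rewrite char_poly_Kmx_rec // Kmx3_minor char_poly_Kmx3 !char_poly_Nmx_rec.
  by rewrite char_poly_Nmx1 char_poly_Nmx0; ring.
Qed.
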